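(* Let $T,L$ be positive integers and $\epsilon\in(0,1)$. For $\rho=\{\rho_t^l\}\in[0,1]^{T\times L}$ let $F(\rho)=\sum_{t,l}\rho_t^l r_t^l b_t^l(\rho_t^l)$, $G(\rho)=1-\prod_{t=1}^T\prod_{l=1}^L\rho_t^l$, $H(\rho)=\sum_{t,l}(1-\rho_t^l)$. Let $\rho^\ast$ be an optimal solution of PA1: $\min F(\rho)$ s.t. $G(\rho)\le\epsilon$, $\rho\in[0,1]^{T\times L}$. Let $\tilde\lambda,\tilde\rho$ be optimal solutions of $\max_{\lambda\ge0}\min_{\rho\in[0,1]^{T\times L}}\{F(\rho)+\lambda[H(\rho)-\epsilon]\}$. Then $$0\le F(\tilde\rho)-F(\rho^\ast)\le\tilde\lambda\,(TL-1)\epsilon.$$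
   Context: For each $t\in\{1,\dots,T\}$, $l\in\{1,\dots,L\}$: $r_t^l$ is a positive integer and $b_t^l:[0,1]\to[0,b^l_{\max}]$ is strictly increasing and convex. $\rho_t^l$ is the probability of the event of successfully recruiting $r_t^l$ participants at time $t$, location $l$, and these events are independent. PA2 denotes the problem $\min F(\rho)$ s.t. $H(\rho)\le\epsilon$, $\rho\in[0,1]^{T\times L}$, so $F(\tilde\rho)$ is the optimal value of PA2. *)

From HB Require Import structures.
From mathcomp Require Import all_boot all_order all_algebra.
From mathcomp Require Import reals.
Set Implicit Arguments. Unset Strict Implicit. Unset Printing Implicit Defensive.
Import Order.TTheory GRing.Theory Num.Theory.
Local Open Scope ring_scope.

Definition in_box (R : realType) (T L : nat) (rho : 'I_T -> 'I_L -> R) : Prop :=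
  forall t l, 0 <= rho t l <= 1.

Definition Fobj (R : realType) (T L : nat) (r : 'I_T -> 'I_L -> nat)
  (b : 'I_T -> 'I_L -> R -> R) (rho : 'I_T -> 'I_L -> R) : R :=
  \sum_(t < T) \sum_(l < L) rho t l * (r t l)%:R * b t l (rho t l).

Definition Gfun (R : realType) (T L : nat) (rho : 'I_T -> 'I_L -> R) : R :=
  1 - \prod_(t < T) \prod_(l < L) rho t l.

Definition Hfun (R : realType) (T L : nat) (rho : 'I_T -> 'I_L -> R) : R :=
  \sum_(t < T) \sum_(l < L) (1 - rho t l).

Definition Lagr (R : realType) (T L : nat) (r : 'I_T -> 'I_L -> nat)
  (b : 'I_T -> 'I_L -> R -> R) (eps lam : R) (rho : 'I_T -> 'I_L -> R) : R :=
  Fobj r b rho + lam * (Hfun rho - eps).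

Definition strictly_incr01 (R : realType) (f : R -> R) : Prop :=
  forall x y, 0 <= x -> x < y -> y <= 1 -> f x < f y.

Definition convex01 (R : realType) (f : R -> R) : Prop :=
  forall x y a, 0 <= x <= 1 -> 0 <= y <= 1 -> 0 <= a <= 1 ->
    f (a * x + (1 - a) * y) <= a * f x + (1 - a) * f y.

From HB Require Import structures.
From mathcomp Require Import all_boot all_order all_algebra.
From mathcomp Require Import reals.
From mathcomp Require Import ring lra.
Set Implicit Arguments. Unset Strict Implicit. Unset Printing Implicit Defensive.
Import Order.TTheory GRing.Theory Num.Theory.
Local Open Scope ring_scope.

(** On the box, [1 - prod rho <= sum (1 - rho) <= TL (1 - prod rho)], i.e.
    [G <= H <= TL G].  Hence the feasible set of PA2 lies inside that of PA1,
    which gives the lower bound, and [H rho_star <= TL eps].  Minimality of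
    [rho_t] for the Lagrangian gives
    [F rho_t - F rho_star <= lam_t (H rho_star - H rho_t)], so it remains to see
    that [eps <= H rho_t] when [lam_t > 0].  Otherwise lowering [lam_t] slightly
    would, by dual optimality, yield near-minimizers [rho] of the Lagrangian at
    [lam_t] with [H rho] well above [H rho_t], hence with some coordinate well
    below that of [rho_t].  Comparing with the midpoint of [rho] and [rho_t],
    strict monotonicity and convexity of the [b]s make the Lagrangian at such
    [rho] exceed its minimum by a uniform margin: a contradiction. *)

Section FiniteSums.
Variable R : realFieldType.

Lemma subr1_prod_le_sum (I : Type) (s : seq I) (P : I -> R) :
  (forall i, 0 <= P i <= 1) -> 1 - \prod_(i <- s) P i <= \sum_(i <- s) (1 - P i).
Proof.
move=> P01; elim: s => [|i s IHs]; first by rewrite !big_nil subrr.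
rewrite !big_cons; have /andP[Pi0 Pi1] := P01 i.
have p0 : 0 <= \prod_(j <- s) P j by apply: prodr_ge0 => j _; case/andP: (P01 j).
have p1 : \prod_(j <- s) P j <= 1 by rewrite prodr_ile1.
nra.
Qed.

Lemma prodr_le_factor (I : finType) (P : I -> R) j :
  (forall i, 0 <= P i <= 1) -> \prod_i P i <= P j.
Proof.
move=> P01; rewrite (bigD1 j) //=; apply: ler_piMr; first by case/andP: (P01 j).
by apply: prodr_ile1 => i _; exact: P01.
Qed.

Lemma ler_sum2_const (T L : nat) (f : 'I_T -> 'I_L -> R) c :
  (forall t l, f t l <= c) -> \sum_(t < T) \sum_(l < L) f t l <= (T * L)%:R * c.
Proof.
move=> fc; apply: le_trans (_ : \sum_(t < T) \sum_(l < L) c <= _).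
  by apply: ler_sum => t _; apply: ler_sum => l _.
by rewrite !sumr_const !card_ord -mulrnA mulr_natl mulnC.
Qed.

Lemma ler_sum2_term (T L : nat) (f : 'I_T -> 'I_L -> R) t l :
  (forall t l, 0 <= f t l) -> f t l <= \sum_(t < T) \sum_(l < L) f t l.
Proof.
move=> f0; rewrite (bigD1 t) //= (bigD1 l) //= -addrA lerDl.
by rewrite addr_ge0 ?sumr_ge0 // => i _; rewrite sumr_ge0.
Qed.

(* The witness [(1 + \sum 1/f)^-1] also works when no [i] satisfies [P]. *)
Lemma finite_pos_lower_bound (I : finType) (P : pred I) (f : I -> R) :
  (forall i, P i -> 0 < f i) -> exists2 k, 0 < k & forall i, P i -> k <= f i.
Proof.
move=> f0; set S := \sum_(i | P i) (f i)^-1.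
have S0 : 0 <= S by apply: sumr_ge0 => i /f0 /ltW; rewrite invr_ge0.
exists (1 + S)^-1; first by rewrite invr_gt0 ltr_wpDr.
move=> i Pi; rewrite -[f i]invrK lef_pV2 ?posrE ?invr_gt0 ?f0 ?ltr_wpDr //.
rewrite /S (bigD1 i) //= addrCA lerDl addr_ge0 //.
by apply: sumr_ge0 => j /andP[/f0 /ltW]; rewrite invr_ge0.
Qed.

End FiniteSums.

Section IncreasingConvex.
Variables (R : realType) (f : R -> R).
Hypothesis f_incr : strictly_incr01 f.

Lemma strictly_incr01_le x y : 0 <= x -> x <= y -> y <= 1 -> f x <= f y.
Proof.
move=> x0; rewrite le_eqVlt => /predU1P[-> // | xy] y1.
exact: ltW (f_incr x0 xy y1).
Qed.

Lemma strictly_incr01_drop_gt0 y d : 0 < d -> d <= y -> y <= 1 -> 0 < f y - f (y - d).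
Proof. by move=> d0 dy y1; rewrite subr_gt0; apply: f_incr; rewrite ?subr_ge0 ?gtrBl. Qed.

Lemma strictly_incr01_cross_ge0 x y :
  0 <= x <= 1 -> 0 <= y <= 1 -> 0 <= (y - x) * (f y - f x).
Proof.
move=> /andP[x0 x1] /andP[y0 y1].
case: (ltgtP x y) => [xy | yx | ->]; last by rewrite subrr mul0r.
- have := f_incr x0 xy y1; nra.
- have := f_incr y0 yx x1; nra.
Qed.

Lemma strictly_incr01_cross_ge_drop x y d :
  0 <= x -> 0 < d -> d <= y - x -> y <= 1 ->
  d * (f y - f (y - d)) <= (y - x) * (f y - f x).
Proof.
move=> x0 d0 dxy y1.
have fx : f x <= f (y - d) by apply: strictly_incr01_le => //; lra.
have fd : 0 < f y - f (y - d) by apply: strictly_incr01_drop_gt0 => //; lra.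
by apply: ler_pM; lra.
Qed.

Lemma convex01_midpoint_gap x y : convex01 f -> 0 <= x <= 1 -> 0 <= y <= 1 ->
  (y - x) * (f y - f x) / 2 <= x * f x + y * f y - 2 * ((x + y) / 2 * f ((x + y) / 2)).
Proof.
move=> f_cvx x01 y01; have /andP[x0 _] := x01; have /andP[y0 _] := y01.
have half01 : 0 <= (2^-1 : R) <= 1 by apply/andP; split; lra.
have := f_cvx x y 2^-1 x01 y01 half01.
have -> : 2^-1 * x + (1 - 2^-1) * y = (x + y) / 2 by field.
have xy0 : 0 <= x + y by lra.
move=> /(ler_wpM2l xy0) fm.
suff : (y - x) * (f y - f x) / 2 + (x + y) * (2^-1 * f x + (1 - 2^-1) * f y)
  = x * f x + y * f y by lra.
by field.
Qed.

End IncreasingConvex.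

Section Relaxation.
Variables (R : realType) (T L : nat).
Variables (r : 'I_T -> 'I_L -> nat) (b : 'I_T -> 'I_L -> R -> R).
Implicit Types (rho : 'I_T -> 'I_L -> R) (eps lam : R).
Local Notation N := ((T * L)%:R : R).
Local Notation F := (Fobj r b).
Local Notation Lag := (Lagr r b).

Lemma prod_in_box01 rho : in_box rho -> forall t, 0 <= \prod_(l < L) rho t l <= 1.
Proof.
move=> box t; apply/andP; split; [apply: prodr_ge0 | apply: prodr_ile1] => l _.
  by case/andP: (box t l).
exact: box.
Qed.

Lemma Gfun_le_Hfun rho : in_box rho -> Gfun rho <= Hfun rho.
Proof.
move=> box; rewrite /Gfun /Hfun.
apply: le_trans (subr1_prod_le_sum _ (prod_in_box01 box)) _.
by apply: ler_sum => t _; apply: subr1_prod_le_sum.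
Qed.

Lemma Hfun_le_Gfun rho : in_box rho -> Hfun rho <= N * Gfun rho.
Proof.
move=> box; apply: ler_sum2_const => t l; rewrite lerD2l lerN2.
exact: le_trans (prodr_le_factor t (prod_in_box01 box)) (prodr_le_factor l (box t)).
Qed.

Lemma Hfun_sub rho rho' :
  Hfun rho - Hfun rho' = \sum_(t < T) \sum_(l < L) (rho' t l - rho t l).
Proof.
rewrite /Hfun -sumrB; apply: eq_bigr => t _; rewrite -sumrB.
by apply: eq_bigr => l _; ring.
Qed.

Lemma Hfun_gap_coord rho rho' d :
  N * d < Hfun rho - Hfun rho' -> exists t l, d < rho' t l - rho t l.
Proof.
move=> gap; have [/existsP[t /existsP[l drop]] | /existsPn none] :=
  boolP [exists t, exists l, d < rho' t l - rho t l]; first by exists t, l.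
suff : Hfun rho - Hfun rho' <= N * d by rewrite leNgt gap.
rewrite Hfun_sub; apply: ler_sum2_const => t l.
by move: (none t) => /existsPn /(_ l); rewrite -leNgt.
Qed.

Lemma LagrB eps lam s rho : Lag eps (lam - s) rho = Lag eps lam rho - s * (Hfun rho - eps).
Proof. by rewrite /Lagr; ring. Qed.

Lemma Lagr_min_Fobj_gap eps lam rho0 rho :
  Lag eps lam rho0 <= Lag eps lam rho -> F rho0 - F rho <= lam * (Hfun rho - Hfun rho0).
Proof. by rewrite /Lagr; lra. Qed.

Definition midpoint rho rho' t l : R := (rho t l + rho' t l) / 2.

Lemma in_box_midpoint rho rho' : in_box rho -> in_box rho' -> in_box (midpoint rho rho').
Proof.
move=> box box' t l; have /andP[? ?] := box t l; have /andP[? ?] := box' t l.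
by rewrite /midpoint; apply/andP; split; lra.
Qed.

Lemma Lagr_midpoint_gap eps lam rho rho' :
  Lag eps lam rho + Lag eps lam rho' - 2 * Lag eps lam (midpoint rho rho') =
  F rho + F rho' - 2 * F (midpoint rho rho').
Proof.
have Hmid : Hfun (midpoint rho rho') = (Hfun rho + Hfun rho') / 2.
  rewrite /Hfun -big_split mulr_suml; apply: eq_bigr => t _.
  by rewrite -big_split mulr_suml; apply: eq_bigr => l _ /=; rewrite /midpoint; field.
by rewrite /Lagr Hmid; field.
Qed.

Lemma Fobj_PA1_opt_le_PA2_inf eps rho1 v :
  (forall rho, in_box rho -> Gfun rho <= eps -> F rho1 <= F rho) ->
  (forall delta, 0 < delta ->
     exists rho, [/\ in_box rho, Hfun rho <= eps & F rho < v + delta]) ->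
  F rho1 <= v.
Proof.
move=> opt1 approx; apply/ler_addgt0Pr => delta /approx[rho [box H_le F_lt]].
have feasible : Gfun rho <= eps := le_trans (Gfun_le_Hfun box) H_le.
exact: ltW (le_lt_trans (opt1 _ box feasible) F_lt).
Qed.

Hypothesis r_gt0 : forall t l, (0 < r t l)%N.
Hypothesis b_incr : forall t l, strictly_incr01 (b t l).
Hypothesis b_cvx : forall t l, convex01 (b t l).

Lemma Fobj_midpoint_gap rho rho' t l : in_box rho -> in_box rho' ->
  (r t l)%:R * ((rho' t l - rho t l) * (b t l (rho' t l) - b t l (rho t l))) / 2
  <= F rho + F rho' - 2 * F (midpoint rho rho').
Proof.
move=> box box'.
pose gap t l := (r t l)%:R * ((rho' t l - rho t l) * (b t l (rho' t l) - b t l (rho t l))) / 2.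
apply: le_trans (ler_sum2_term (f := gap) t l _) _ => [t' l'|].
  rewrite /gap divr_ge0 // mulr_ge0 //.
  by apply: (strictly_incr01_cross_ge0 (b_incr t' l')).
rewrite /Fobj mulr_sumr -big_split -sumrB; apply: ler_sum => t' _.
rewrite mulr_sumr -big_split -sumrB; apply: ler_sum => l' _ /=.
have := convex01_midpoint_gap (b_cvx t' l') (box t' l') (box' t' l').
rewrite /gap /midpoint; move: (b t' l') ((r t' l')%:R) (ler0n R (r t' l')) => f c c0.
set x := rho t' l'; set y := rho' t' l'.
nra.
Qed.

Lemma Lagr_min_uniform_gap eps lam rho0 d :
  in_box rho0 -> (forall rho, in_box rho -> Lag eps lam rho0 <= Lag eps lam rho) ->
  0 < d ->
  exists2 k, 0 < k & forall rho t l, in_box rho -> d <= rho0 t l - rho t l ->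
    Lag eps lam rho0 + k <= Lag eps lam rho.
Proof.
move=> box0 min0 d0.
pose drop (p : 'I_T * 'I_L) := let: (t, l) := p in
  (r t l)%:R * (d * (b t l (rho0 t l) - b t l (rho0 t l - d))) / 2.
have [[t l] /= d_le | k k0 k_le] :=
    @finite_pos_lower_bound _ _ (fun p => d <= rho0 p.1 p.2) drop.
  have /andP[_ rho0_le1] := box0 t l.
  by rewrite divr_gt0 // mulr_gt0 ?ltr0n // mulr_gt0 // strictly_incr01_drop_gt0.
exists k => [// | rho t l box d_le].
have /andP[rho_ge0 _] := box t l; have /andP[_ rho0_le1] := box0 t l.
have k_drop : k <= drop (t, l) by apply: k_le => /=; lra.
have drop_gap : drop (t, l) <= (r t l)%:R *
    ((rho0 t l - rho t l) * (b t l (rho0 t l) - b t l (rho t l))) / 2.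
  rewrite /= ler_pM2r ?invr_gt0 // ler_wpM2l //.
  exact: strictly_incr01_cross_ge_drop.
have := Fobj_midpoint_gap t l box box0.
rewrite -(Lagr_midpoint_gap eps lam).
have := min0 _ (in_box_midpoint box box0).
lra.
Qed.

Lemma Lagr_dual_opt_slack eps lam rho0 :
  (0 < T)%N -> (0 < L)%N -> 0 < eps -> 0 < lam -> in_box rho0 ->
  (forall rho, in_box rho -> Lag eps lam rho0 <= Lag eps lam rho) ->
  (forall lam', 0 <= lam' -> forall delta, 0 < delta ->
     exists rho, in_box rho /\ Lag eps lam' rho < Lag eps lam rho0 + delta) ->
  eps <= Hfun rho0.
Proof.
move=> T0 L0 eps0 lam0 box0 min0 dual; rewrite leNgt; apply/negP => H_lt.
set g := eps - Hfun rho0; have g0 : 0 < g by rewrite subr_gt0.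
have N0 : 0 < N by rewrite ltr0n muln_gt0 T0 L0.
have [|k k0 k_le] := Lagr_min_uniform_gap box0 min0 (d := g / (4 * N)).
  by rewrite divr_gt0 ?mulr_gt0.
(* [s <= lam] keeps [lam - s] dual feasible; [s (g/2 + N) <= k] keeps the
   near-minimizers at [lam - s] within [k] of the minimum at [lam]. *)
set s := Num.min lam (k / (g / 2 + N)).
have gN0 : 0 < g / 2 + N by lra.
have s0 : 0 < s by rewrite lt_min lam0 divr_gt0.
have s_le : s <= lam by rewrite ge_min lexx.
have s_k : s * (g / 2 + N) <= k by rewrite -ler_pdivlMr // ge_min lexx orbT.
have lam_s : 0 <= lam - s by rewrite subr_ge0.
have [|rho [box near]] := dual (lam - s) lam_s (s * (g / 2)).
  by rewrite mulr_gt0 // divr_gt0.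
rewrite LagrB in near.
have min_rho := min0 _ box.
have H_le : Hfun rho <= N * 1.
  by apply: ler_sum2_const => t l; have /andP[? _] := box t l; lra.
have H_gap : - (g / 2) < Hfun rho - eps.
  by rewrite -(ltr_pM2l s0); lra.
have [t [l drop]] : exists t l, g / (4 * N) < rho0 t l - rho t l.
  apply: Hfun_gap_coord.
  have -> : N * (g / (4 * N)) = g / 4.
    by field; rewrite !pnatr_eq0 -!lt0n L0 T0.
  rewrite /g in H_gap *; lra.
have := k_le rho t l box (ltW drop).
have : s * (Hfun rho - eps) <= s * N by apply: ler_wpM2l; [exact: ltW | lra].
lra.
Qed.

End Relaxation.

Theorem theorem2 (R : realType) (T L : nat) (eps : R)
  (r : 'I_T -> 'I_L -> nat) (bmax : 'I_L -> R) (b : 'I_T -> 'I_L -> R -> R)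
  (rho_star rho_t : 'I_T -> 'I_L -> R) (lam_t : R) :
  (0 < T)%N -> (0 < L)%N -> 0 < eps -> eps < 1 ->
  (forall t l, (0 < r t l)%N) ->
  (forall t l x, 0 <= x <= 1 -> 0 <= b t l x <= bmax l) ->
  (forall t l, strictly_incr01 (b t l)) ->
  (forall t l, convex01 (b t l)) ->
  (* rho_star is an optimal solution of PA1 *)
  in_box rho_star -> Gfun rho_star <= eps ->
  (forall rho, in_box rho -> Gfun rho <= eps ->
     Fobj r b rho_star <= Fobj r b rho) ->
  (* rho_t minimizes the Lagrangian at lam_t *)
  0 <= lam_t -> in_box rho_t ->
  (forall rho, in_box rho -> Lagr r b eps lam_t rho_t <= Lagr r b eps lam_t rho) ->
  (* lam_t maximizes the dual function lam |-> inf_rho Lagr lam rho over lam >= 0 *)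
  (forall lam, 0 <= lam -> forall delta, 0 < delta ->
     exists rho, in_box rho /\ Lagr r b eps lam rho < Lagr r b eps lam_t rho_t + delta) ->
  (* F(rho_t) is the optimal value (infimum) of PA2 (as stated in the context) *)
  (forall rho, in_box rho -> Hfun rho <= eps -> Fobj r b rho_t <= Fobj r b rho) ->
  (forall delta, 0 < delta -> exists rho, in_box rho /\ Hfun rho <= eps /\
     Fobj r b rho < Fobj r b rho_t + delta) ->
  0 <= Fobj r b rho_t - Fobj r b rho_star <=
    lam_t * ((T * L)%:R - 1) * eps.
Proof.
move=> T0 L0 eps0 _ r_gt0 _ b_incr b_cvx box_s G_s opt_s lam0 box_t min_t dual_t _ inf_t.
have F_le : Fobj r b rho_star <= Fobj r b rho_t.
  apply: Fobj_PA1_opt_le_PA2_inf opt_s _ => delta /inf_t[rho [box [H_le F_lt]]].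
  by exists rho.
have H_s : Hfun rho_star <= (T * L)%:R * eps.
  by apply: le_trans (Hfun_le_Gfun box_s) _; rewrite ler_wpM2l.
have slack : lam_t * (Hfun rho_star - Hfun rho_t) <= lam_t * ((T * L)%:R - 1) * eps.
  move: lam0; rewrite le_eqVlt => /predU1P[<- | lam_gt0]; first by rewrite !mul0r.
  rewrite -mulrA ler_pM2l // mulrBl mul1r; apply: lerB H_s _.
  by apply: Lagr_dual_opt_slack min_t dual_t.
rewrite subr_ge0 F_le /=; apply: le_trans slack.
exact: Lagr_min_Fobj_gap (min_t _ box_s).
Qed.
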